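(* For every $m\in\mathbb{Z}_{>0}$, $\alpha(-1)F^m\in C_2(V_L^+)$.
   Context: $L=\mathbb{Z}\alpha$, $\langle\alpha,\alpha\rangle=2k$; $V_L=M(1)\otimes\mathbb{C}[L]$ the lattice VOA, $V_L^+$ the fixed points of the involution $\theta$ lifted from $-1$ on $L$. $F^m=e^{m\alpha}-e^{-m\alpha}$. $C_2(V)$ is the span of $\{v_{-2}u:u,v\in V\}$. *)

(* Concrete model of the rank-one lattice VOA V_L,
   L = Z alpha, <alpha,alpha> = 2k, over the complex numbers (algC). *)
From HB Require Import structures.
From mathcomp Require Import all_boot all_order all_algebra all_field.
From mathcomp Require Import finmap.
From mathcomp Require Import monalg.

Set Implicit Arguments.
Unset Strict Implicit.
Unset Printing Implicit Defensive.

Import GRing.Theory Num.Theory.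
Local Open Scope ring_scope.

(* A partition [n_1; ...; n_r] (n_1 >= ... >= n_r >= 1) encodes the monomial
   alpha(-n_1) ... alpha(-n_r). *)
Definition is_part (s : seq nat) : bool :=
  sorted (fun a b => (b <= a)%N) s && all (fun x => (0 < x)%N) s.

Definition part := {s : seq nat | is_part s}.

Definition normp (s : seq nat) : seq nat :=
  sort (fun a b => (b <= a)%N) [seq x <- s | (0 < x)%N].

Lemma normpP (s : seq nat) : is_part (normp s).
Proof.
rewrite /is_part /normp; apply/andP; split.
  apply: sort_sorted => a b; exact: leq_total.
by apply/allP => x; rewrite mem_sort mem_filter => /andP[].
Qed.

Definition mkpart (s : seq nat) : part := exist _ (normp s) (normpP s).

(* basis index: (monomial, j) stands for  monomial (x) e^{j alpha} *)
Definition KL := (part * int)%type.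

Definition VL := {malg algC[KL]}.

Definition bv (x : KL) : VL := << x >>.

Definition lin (f : KL -> VL) (v : VL) : VL :=
  \sum_(x <- msupp v) v@_x *: f x.

Definition degK (x : KL) : nat := sumn (val x.1).

(* L_0-weight of a basis vector: deg + <j alpha, j alpha>/2 = deg + k j^2 *)
Definition wtK (k : nat) (p : seq nat) (j : int) : int :=
  (sumn p)%:Z + (k%:Z * j ^+ 2).

(* Heisenberg operators alpha(n), [alpha(m),alpha(n)] = 2k m delta_{m+n,0} *)
Definition alphaB (k : nat) (n : int) (x : KL) : VL :=
  let p := val x.1 in let j := x.2 in
  match n with
  | Posz 0 => ((2 * k)%:R * j%:~R) *: bv x
  | Posz n'.+1 =>
      ((2 * k * n'.+1 * count_mem n'.+1 p)%:R) *: bv (mkpart (rem n'.+1 p), j)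
  | Negz n' => bv (mkpart (n'.+1 :: p), j)
  end.

Definition alpha (k : nat) (n : int) : VL -> VL := lin (alphaB k n).

(* coefficients of exp(sum_{n>=1} A_n y^n) with n A_n = op n (commuting
   operators): a E_a = sum_{n=1}^a op n (E_{a-n}), E_0 = id; the list
   [E_0 w; ...; E_a w]. *)
Fixpoint Elist (op : nat -> VL -> VL) (a : nat) (w : VL) : seq VL :=
  match a with
  | 0 => [:: w]
  | a'.+1 =>
      let l := Elist op a' w in
      rcons l ((a'.+1%:R : algC)^-1 *:
                 \sum_(n < a'.+1) op n.+1 (nth 0 l (a' - n)))
  end.

Definition Ecoef (op : nat -> VL -> VL) (a : nat) (w : VL) : VL :=
  nth 0 (Elist op a w) a.

(* E^-(-beta,z) = exp(sum_{n>0} beta(-n) z^n / n), beta = b alpha *)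
Definition Eminus (k : nat) (b : int) (a : nat) : VL -> VL :=
  Ecoef (fun n v => b%:~R *: alpha k (- (n%:Z)) v) a.

(* coefficient of z^{-c} in E^+(-beta,z) = exp(- sum_{n>0} beta(n) z^{-n}/n) *)
Definition Eplus (k : nat) (b : int) (c : nat) : VL -> VL :=
  Ecoef (fun n v => - (b%:~R *: alpha k (n%:Z) v)) c.

(* q-th mode of e^{b alpha} applied to a basis vector, from
   Y(e^beta,z) = E^-(-beta,z) E^+(-beta,z) e_beta z^beta
   (trivial 2-cocycle, legitimate since <alpha,alpha> = 2k is even). *)
Definition emode (k : nat) (b : int) (q : int) (w : KL) : VL :=
  let p := val w.1 in let j := w.2 in
  \sum_(c < (sumn p).+1)
    let a : int := c%:Z - q - 1 - (2 * k)%:Z * b * j in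
    if (0 <= a) then Eminus k b (absz a) (Eplus k b c (bv (w.1, j + b)))
    else 0.

(* q-th mode of the basis vector alpha(-n_1)...alpha(-n_r) e^{j alpha}
   applied to a basis vector w, via the iterate formula
   (alpha(-n) v)_q = sum_{i>=0} C(n+i-1,i) (alpha(-n-i) v_{q+i}
                                            - (-1)^n v_{q-n-i} alpha(i)).
   The sum is truncated at an index beyond which all terms vanish
   (alpha(i) w = 0 for i > deg w, and v_s w = 0 once its weight is < 0). *)
Fixpoint modeS (k : nat) (p : seq nat) (j : int) (q : int) (w : KL)
    {struct p} : VL :=
  match p with
  | [::] => emode k j q w
  | n :: p' =>
      \sum_(i < (degK w + absz ((wtK k p' j + wtK k (val w.1) w.2 - q)%R)).+1)
        ('C(n + i - 1, i))%:R *: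
          (alpha k (- (n + i)%:Z) (modeS k p' j (q + i%:Z) w)
           - (-1) ^+ n *: lin (modeS k p' j (q - n%:Z - i%:Z))
                              (alpha k i%:Z (bv w)))
  end.

(* v_q u : the q-th mode of Y(v,z) = sum_q v_q z^{-q-1}, bilinear in v, u *)
Definition mode (k : nat) (v : VL) (q : int) (u : VL) : VL :=
  \sum_(x <- msupp v) \sum_(y <- msupp u)
     (v@_x * u@_y) *: modeS k (val x.1) x.2 q y.

(* the involution theta: alpha(-n) |-> -alpha(-n), e^{j alpha} |-> e^{-j alpha} *)
Definition thetaB (x : KL) : VL := (-1) ^+ size (val x.1) *: bv (x.1, - x.2).
Definition theta : VL -> VL := lin thetaB.

Definition VLplus (v : VL) : Prop := theta v = v.

Definition C2plus (k : nat) (w : VL) : Prop :=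
  exists s : seq (algC * VL * VL),
    (forall t, t \in s -> VLplus t.1.2 /\ VLplus t.2) /\
    w = \sum_(t <- s) t.1.1 *: mode k t.1.2 (-2) t.2.

Definition Fm (m : int) : VL := bv (mkpart [::], m) - bv (mkpart [::], - m).

From HB Require Import structures.
From mathcomp Require Import all_boot all_order all_algebra all_field.
From mathcomp Require Import finmap.
From mathcomp Require Import monalg.
Import GRing.Theory Num.Theory.
Local Open Scope ring_scope.

(* The vertex operator of e^beta applied to the vacuum is e^{z L(-1)} e^beta,
   and L(-1) e^beta = beta(-1) e^beta; so (e^{m alpha})_{-2} 1 = m alpha(-1) e^{m alpha}.
   Since 1 and E^m = e^{m alpha} + e^{-m alpha} lie in V_L^+, the element
   (E^m)_{-2} 1 = m alpha(-1) F^m lies in C_2(V_L^+). *)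

Section Linear_extension.

Variable f : KL -> VL.

Lemma lin_fsubset (v : VL) (d : {fset KL}) : (msupp v `<=` d)%fset ->
  lin f v = \sum_(x <- d) v@_x *: f x.
Proof.
move=> le_vd; rewrite /lin (big_fset_incl _ le_vd) //= => x _ /mcoeff_outdom ->.
by rewrite scale0r.
Qed.

Lemma linD (v w : VL) : lin f (v + w) = lin f v + lin f w.
Proof.
rewrite (@lin_fsubset (v + w) (msupp v `|` msupp w)%fset) ?msuppD_le //.
rewrite (@lin_fsubset v (msupp v `|` msupp w)%fset) ?fsubsetUl //.
rewrite (@lin_fsubset w (msupp v `|` msupp w)%fset) ?fsubsetUr //.
by rewrite -big_split /=; apply: eq_bigr => x _; rewrite mcoeffD scalerDl.
Qed.

Lemma linN (v : VL) : lin f (- v) = - lin f v.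
Proof.
by rewrite /lin msuppN -sumrN; apply: eq_bigr => x _; rewrite mcoeffN scaleNr.
Qed.

Lemma linB (v w : VL) : lin f (v - w) = lin f v - lin f w.
Proof. by rewrite linD linN. Qed.

Lemma lin_bv (x : KL) : lin f (bv x) = f x.
Proof. by rewrite /lin /bv msuppU oner_eq0 big_seq_fset1 mcoeffUU scale1r. Qed.

End Linear_extension.

Lemma modeE (k : nat) (v : VL) (q : int) (u : VL) :
  mode k v q u = lin (fun x => lin (modeS k (val x.1) x.2 q) u) v.
Proof.
rewrite /mode /lin; apply: eq_bigr => x _; rewrite scaler_sumr.
by apply: eq_bigr => y _; rewrite scalerA.
Qed.

Lemma modeDl (k : nat) (v w : VL) (q : int) (u : VL) :
  mode k (v + w) q u = mode k v q u + mode k w q u.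
Proof. by rewrite !modeE linD. Qed.

Definition ebv (j : int) : VL := bv (mkpart [::], j).

Lemma theta_ebv (j : int) : theta (ebv j) = ebv (- j).
Proof. by rewrite /theta lin_bv /thetaB expr0 scale1r. Qed.

Lemma thetaD (v w : VL) : theta (v + w) = theta v + theta w.
Proof. exact: linD. Qed.

Lemma VLplus_vacuum : VLplus (ebv 0).
Proof. by rewrite /VLplus theta_ebv oppr0. Qed.

Lemma VLplus_ebv_sym (j : int) : VLplus (ebv j + ebv (- j)).
Proof.
(* Rewriting with theta_ebv here would try to unify ebv j with ebv (- j), which
   unfolds bv into its finite-support representation; congr avoids that. *)
rewrite /VLplus thetaD addrC; congr (_ + _).
  by rewrite theta_ebv opprK.
exact: theta_ebv.
Qed.

Lemma ebv_mode_vacuum (k : nat) (b : int) :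
  mode k (ebv b) (-2) (ebv 0) = b%:~R *: alpha k (-1) (ebv b).
Proof.
(* Only c = 0 contributes to emode, with a = 1: the modes E^+_0 = 1 and
   E^-_1 = b alpha(-1). *)
rewrite modeE !lin_bv /= /emode big_ord1 /= mulr0 subr0.
have -> : ((@ord0 0 : nat)%:Z - -2 - 1 : int) = 1 by [].
by rewrite /Eminus /Eplus /Ecoef /= big_ord1 invr1 scale1r add0r.
Qed.

Lemma alpha_sub (k : nat) (n : int) (v w : VL) :
  alpha k n (v - w) = alpha k n v - alpha k n w.
Proof. exact: linB. Qed.

Lemma ebv_sym_mode_vacuum (k : nat) (b : int) :
  mode k (ebv b + ebv (- b)) (-2) (ebv 0) = b%:~R *: alpha k (-1) (ebv b - ebv (- b)).
Proof.
rewrite modeDl alpha_sub scalerBr -scaleNr -intrN.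
by congr (_ + _); exact: ebv_mode_vacuum.
Qed.

Theorem lemma4p6 (k : nat) (hk : (0 < k)%N) (m : nat) (hm : (0 < m)%N) :
  C2plus k (alpha k (-1) (Fm m%:Z)).
Proof.
have m_neq0 : (m%:Z%:~R : algC) != 0 by rewrite intr_eq0 eqz_nat -lt0n.
exists [:: ((m%:Z%:~R)^-1, ebv m%:Z + ebv (- m%:Z), ebv 0)]; split.
  by move=> t; rewrite inE => /eqP ->; split; [exact: VLplus_ebv_sym | exact: VLplus_vacuum].
by rewrite big_seq1 /= ebv_sym_mode_vacuum scalerA mulVf // scale1r.
Qed.
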